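(* Let $\mathcal{K}$ be a finite simplicial complex with a fixed total order on its vertex set, and let $(\Lambda_S,d_S)$ be its stories algebra with the differential $d_S$ described below. Then $\mathcal{I}=\bigoplus_{n\ge1}(\mathcal{I}_N^n\oplus\mathcal{I}_S^n)$ is a differential ideal of $\Lambda_S$: it is a two-sided ideal and $d_S(\mathcal{I}^n)\subseteq\mathcal{I}^{n+1}$ for all $n$, where $\mathcal{I}^n=\mathcal{I}_N^n\oplus\mathcal{I}_S^n$.
   Context: A (finite abstract) simplicial complex $\mathcal{K}$ on a finite non-empty vertex set $V$ is a collection of non-empty subsets of $V$ (simplices) containing every singleton $\{v\}$, $v\in V$, and closed under taking non-empty subsets. $\dim P=|P|-1$. For a simplex $P=\{v_0,\ldots,v_n\}$ listed in increasing order of the fixed vertex order, the incidence coefficient is $\epsilon_{v_iP}=(-1)^i$. Stories: a homogeneous $n$-story is a sequence $\langle P_0,\ldots,P_n\rangle$ of simplices of $\mathcal{K}$ with $P_{i-1}\neq P_i$ for $i=1,\ldots,n$; $\Lambda_S=\bigoplus_{n\ge0}\Lambda_S^n$ where $\Lambda_S^n$ is the complex vector space with basis the homogeneous $n$-stories, with product $\langle P_0,\ldots,P_n\rangle\cdot\langle Q_0,\ldots,Q_m\rangle=\langle P_0,\ldots,P_n,Q_1,\ldots,Q_m\rangle$ if $P_n=Q_0$ and $0$ otherwise. The differential $d_S:\Lambda_S^n\to\Lambda_S^{n+1}$ is the linear map with $d_S\langle P_0,\ldots,P_n\rangle=\sum_{Q\neq P_0}\langle Q,P_0,\ldots,P_n\rangle+\sum_{k=1}^n(-1)^k\sum_{Q:\,P_{k-1}\neq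 Q\neq P_k}\langle P_0,\ldots,P_{k-1},Q,P_k,\ldots,P_n\rangle+(-1)^{n+1}\sum_{Q\neq P_n}\langle P_0,\ldots,P_n,Q\rangle$ (sums over simplices $Q$ of $\mathcal{K}$). A story $\langle P_0,\ldots,P_n\rangle$ is fair if for every $i=1,\ldots,n$ there is a vertex $v_i\in P_i$ with $P_{i-1}=P_i\setminus\{v_i\}$, and unfair otherwise; for a fair story $w$ put $\epsilon_w=\prod_{i=1}^n\epsilon_{v_iP_i}$. $\mathcal{I}_N^n$ is the span of all unfair homogeneous $n$-stories. $\mathcal{I}_S^n$ is the span of all differences $\epsilon_w w-\epsilon_{w'}w'$ where $w=\langle P_0,P_1,\ldots,P_{n-1},P_n\rangle$ and $w'=\langle P_0,P_1',\ldots,P_{n-1}',P_n\rangle$ are fair $n$-stories with the same initial simplex $P_0$ and the same final simplex $P_n$ (so $P_0\subseteq P_n$ and $\dim P_n-\dim P_0=n$). *)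

From HB Require Import structures.
From mathcomp Require Import all_boot all_order all_algebra.
From mathcomp Require Import reals.
From mathcomp.real_closed Require Import complex.
Set Implicit Arguments. Unset Strict Implicit. Unset Printing Implicit Defensive.
Import Order.TTheory GRing.Theory Num.Theory.
Local Open Scope ring_scope.

Section Stories.
Variables (d : Order.disp_t) (V : finOrderType d) (R : realType).
Local Notation C := (R[i]).
Local Notation simplex := {set V}.
Local Notation story := (seq simplex).

(* the (homogeneous) vector space Lambda_S is represented by formal finite
   linear combinations of stories; two formal sums denote the same vector
   iff they have the same coefficient functions [cf]. *)
Definition fsum := seq (C * story).

Definition cf (x : fsum) (w : story) : C := \sum_(p <- x | p.2 == w) p.1.

Definition scale_fsum (a : C) (x : fsum) : fsum := [seq (a * p.1, p.2) | p <- x].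

Definition lincomb (cs : seq (C * fsum)) : fsum :=
  flatten [seq scale_fsum c.1 c.2 | c <- cs].

Definition simplicial_complex (K : {set simplex}) : Prop :=
  [/\ set0 \notin K, (forall v : V, [set v] \in K) &
      (forall P Q : simplex, P \in K -> Q \subset P -> Q != set0 -> Q \in K)].

Fixpoint nostutter (w : story) : bool :=
  match w with
  | P :: ((Q :: _) as t) => (P != Q) && nostutter t
  | _ => true
  end.

Definition is_story (K : {set simplex}) (w : story) : bool :=
  [&& w != [::], all (fun P => P \in K) w & nostutter w].

Definition is_nstory (K : {set simplex}) (n : nat) (w : story) : bool :=
  is_story K w && (size w == n.+1).

Definition in_Lambda (K : {set simplex}) (x : fsum) : bool :=
  all (is_story K) [seq p.2 | p <- x].

Definition glue (u w : story) : story := u ++ behead w.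
Definition mulS (x y : fsum) : fsum :=
  [seq (p.1 * q.1, glue p.2 q.2) | p <- x, q <- [seq q <- y | last set0 p.2 == head set0 q.2]].

(* differential on a single story <P_0,...,P_n>: inserting Q at position k
   (0 <= k <= n+1) with sign (-1)^k, Q different from its neighbours *)
Definition ins_ok (w : story) (k : nat) (Q : simplex) : bool :=
  ((k == 0%N) || (Q != nth set0 w k.-1)) && ((k == size w) || (Q != nth set0 w k)).

Definition dS1 (K : {set simplex}) (w : story) : fsum :=
  flatten [seq [seq ((-1) ^+ k, take k w ++ Q :: drop k w) | Q <- enum K & ins_ok w k Q]
          | k <- iota 0 (size w).+1].

Definition dS (K : {set simplex}) (x : fsum) : fsum :=
  flatten [seq scale_fsum p.1 (dS1 K p.2) | p <- x].

Fixpoint fair (w : story) : bool :=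
  match w with
  | P :: ((Q :: _) as t) => [exists v in Q, P == Q :\ v] && fair t
  | _ => true
  end.

(* incidence coefficient eps_{vP} = (-1)^i, i = position of v in P *)
Definition eps_vP (v : V) (P : simplex) : C := (-1) ^+ #|[set u in P | (u < v)%O]|.

Definition eps_step (P Q : simplex) : C :=
  if [pick v in Q :\: P] is Some v then eps_vP v Q else 1.

Fixpoint eps_w (w : story) : C :=
  match w with
  | P :: ((Q :: _) as t) => eps_step P Q * eps_w t
  | _ => 1
  end.

Definition genN (K : {set simplex}) (n : nat) (g : fsum) : Prop :=
  exists w, [/\ is_nstory K n w, ~~ fair w & g = [:: (1, w)]].

Definition genS (K : {set simplex}) (n : nat) (g : fsum) : Prop :=
  exists w w', [/\ is_nstory K n w && is_nstory K n w', fair w && fair w',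
    head set0 w = head set0 w', last set0 w = last set0 w' &
    g = [:: (eps_w w, w); (- eps_w w', w')]].

Definition genI (K : {set simplex}) (n : nat) (g : fsum) : Prop :=
  (1 <= n)%N /\ (genN K n g \/ genS K n g).

Definition in_span (G : fsum -> Prop) (x : fsum) : Prop :=
  exists cs : seq (C * fsum), (forall c, c \in cs -> G c.2) /\ cf x =1 cf (lincomb cs).

Definition In (K : {set simplex}) (n : nat) (x : fsum) : Prop := in_span (genI K n) x.
Definition Iall (K : {set simplex}) (x : fsum) : Prop :=
  in_span (fun g => exists n, genI K n g) x.

End Stories.

(* A glued
   story is fair iff both pieces are, and eps_w is multiplicative under gluing, so
   the product of a generator with a story is again a combination of generators:
   I is a two-sided ideal.  On a homogeneous x of degree n the differential splits
   as d_S x = e x + (interior insertions) + (-1)^(n+1) x e, where e is the sum of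
   all 1-stories, so by the ideal property only interior insertions matter.
   Inserting Q between consecutive simplices A, B yields a fair story only if A is
   a codimension-2 face of B and A < Q < B; then Q is one of the two facets of B
   containing A, and these two have opposite incidence signs.  Hence the fair
   insertions form a generator of I_S and all other insertions are unfair. *)

From HB Require Import structures.
From mathcomp Require Import all_boot all_order all_algebra.
From mathcomp Require Import reals.
From mathcomp.real_closed Require Import complex.
Set Implicit Arguments. Unset Strict Implicit. Unset Printing Implicit Defensive.
Import Order.TTheory GRing.Theory Num.Theory.
Local Open Scope ring_scope.

Section FormalSums.
Variables (d : Order.disp_t) (V : finOrderType d) (R : realType).
Local Notation C := (R[i]).
Local Notation story := (seq {set V}).
Local Notation fs := (fsum V R).
Implicit Types (x y z : fs) (G H : fs -> Prop).

Definition lin_ext (g : story -> C) x : C := \sum_(p <- x) p.1 * g p.2.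

Lemma cfE x v : cf x v = lin_ext (fun s => (s == v)%:R) x.
Proof.
rewrite /cf big_mkcond; apply: eq_bigr => p _.
by case: eqP; rewrite ?mulr1 ?mulr0.
Qed.

Lemma cf_map_filter (T : Type) (r : seq T) (P : pred T) (a : T -> C) (f : T -> story) v :
  cf [seq (a t, f t) | t <- r & P t] v = \sum_(t <- r | P t) a t * (f t == v)%:R.
Proof. by rewrite cfE /lin_ext big_map big_filter. Qed.

Lemma cf_cat x y v : cf (x ++ y) v = cf x v + cf y v.
Proof. by rewrite /cf big_cat. Qed.

Lemma cf_scale_fsum (a : C) x v : cf (scale_fsum a x) v = a * cf x v.
Proof. by rewrite /cf /scale_fsum big_map mulr_sumr. Qed.

Lemma lin_ext_seq1 g a s : lin_ext g [:: (a, s)] = a * g s.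
Proof. by rewrite /lin_ext big_seq1. Qed.

Lemma lin_ext_flatten (T : Type) g (r : seq T) (a : T -> C) (F : T -> fs) :
  lin_ext g (flatten [seq scale_fsum (a t) (F t) | t <- r]) =
  \sum_(t <- r) a t * lin_ext g (F t).
Proof.
rewrite /lin_ext big_flatten big_map; apply: eq_bigr => t _.
by rewrite big_map mulr_sumr; apply: eq_bigr => p _; rewrite mulrA.
Qed.

Lemma cf_flatten (T : Type) (r : seq T) (a : T -> C) (F : T -> fs) v :
  cf (flatten [seq scale_fsum (a t) (F t) | t <- r]) v = \sum_(t <- r) a t * cf (F t) v.
Proof. by rewrite cfE lin_ext_flatten; under eq_bigr do rewrite -cfE. Qed.

Lemma lin_ext_supp g x (S : seq story) : uniq S -> {subset map snd x <= S} ->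
  lin_ext g x = \sum_(s <- S) cf x s * g s.
Proof.
move=> uS xS; under [RHS]eq_bigr do rewrite cfE /lin_ext mulr_suml.
rewrite exchange_big; apply: eq_big_seq => p px.
rewrite (big_rem p.2) ?xS ?map_f //= eqxx mulr1 big1_seq ?addr0 // => s /andP[_ s_rem].
have -> : (p.2 == s) = false by apply: contraTF s_rem => /eqP <-; rewrite mem_rem_uniqF.
by rewrite mulr0 mul0r.
Qed.

Lemma eq_lin_ext_cf g x y : cf x =1 cf y -> lin_ext g x = lin_ext g y.
Proof.
move=> xy; pose S := undup (map snd x ++ map snd y).
have xS : {subset map snd x <= S} by move=> s sx; rewrite mem_undup mem_cat sx.
have yS : {subset map snd y <= S} by move=> s sy; rewrite mem_undup mem_cat sy orbT.
rewrite (lin_ext_supp g (undup_uniq _) xS) (lin_ext_supp g (undup_uniq _) yS).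
by under eq_bigr do rewrite xy.
Qed.

Lemma in_span_eq G x y : cf x =1 cf y -> in_span G y -> in_span G x.
Proof. by move=> xy [cs [csG ycs]]; exists cs; split=> // v; rewrite xy ycs. Qed.

Lemma in_span_gen G g : G g -> in_span G g.
Proof.
move=> Gg; exists [:: (1, g)]; split=> [c|v]; first by rewrite inE => /eqP ->.
by rewrite /lincomb /= cats0 cf_scale_fsum mul1r.
Qed.

Lemma in_span_nil G : in_span G [::].
Proof. by exists [::]. Qed.

Lemma in_span_mono G H x : (forall g, G g -> H g) -> in_span G x -> in_span H x.
Proof. by move=> GH [cs [csG xcs]]; exists cs; split=> // c /csG /GH. Qed.

Lemma in_span_add G x y z : (forall v, cf z v = cf x v + cf y v) ->
  in_span G x -> in_span G y -> in_span G z.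
Proof.
move=> zxy [cs [csG xcs]] [ds [dsG yds]]; exists (cs ++ ds); split=> [c|v].
  by rewrite mem_cat => /orP[/csG|/dsG].
by rewrite zxy xcs yds /lincomb map_cat flatten_cat cf_cat.
Qed.

Lemma in_span_scale G (a : C) x z : (forall v, cf z v = a * cf x v) ->
  in_span G x -> in_span G z.
Proof.
move=> zx [cs [csG xcs]]; exists [seq (a * c.1, c.2) | c <- cs]; split=> [c|v].
  by case/mapP=> c' /csG ? ->.
rewrite zx xcs /lincomb -map_comp !cf_flatten mulr_sumr.
by apply: eq_bigr => c _; rewrite mulrA.
Qed.

Lemma in_span_cons G p x : in_span G [:: p] -> in_span G x -> in_span G (p :: x).
Proof. by apply: in_span_add => v; rewrite -cat1s cf_cat. Qed.

Lemma in_span_lin_comb G (T : eqType) (r : seq T) (a : T -> C) (F : T -> fs) z :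
  (forall v, cf z v = \sum_(t <- r) a t * cf (F t) v) ->
  {in r, forall t, in_span G (F t)} -> in_span G z.
Proof.
elim: r z => [|t r IHr] z zE rG.
  by apply: in_span_eq (in_span_nil G) => v; rewrite zE big_nil /cf big_nil.
pose z' := flatten [seq scale_fsum (a t') (F t') | t' <- r].
apply: (in_span_add (x := scale_fsum (a t) (F t)) (y := z')).
- by move=> v; rewrite zE big_cons cf_flatten cf_scale_fsum.
- exact: in_span_scale (cf_scale_fsum _ _) (rG t (mem_head _ _)).
- by apply: IHr => [v|t' t'r]; [rewrite cf_flatten | apply: rG; rewrite inE t'r orbT].
Qed.

Lemma in_span_flatten G (T : eqType) (r : seq T) (F : T -> fs) :
  {in r, forall t, in_span G (F t)} -> in_span G (flatten [seq F t | t <- r]).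
Proof.
apply: (in_span_lin_comb (r := r) (a := fun _ => 1) (F := F)) => v.
by rewrite /cf big_flatten big_map; under [RHS]eq_bigr do rewrite mul1r.
Qed.

Lemma in_span_linear G H (op : fs -> fs) (k : story -> story -> C) :
  (forall x v, cf (op x) v = lin_ext (k^~ v) x) ->
  (forall g, G g -> in_span H (op g)) -> forall x, in_span G x -> in_span H (op x).
Proof.
move=> opE opG x [cs [csG xcs]].
apply: (in_span_lin_comb (r := cs) (a := fst) (F := fun c => op c.2)) => [v|c /csG /opG //].
rewrite opE (eq_lin_ext_cf _ xcs) lin_ext_flatten.
by apply: eq_bigr => c _; rewrite opE.
Qed.

Definition basis_story (P : pred story) (g : fs) : Prop := exists2 w, P w & g = [:: (1, w)].

Lemma in_span_basis (P : pred story) x : all P (map snd x) -> in_span (basis_story P) x.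
Proof.
move=> xP; apply: (in_span_lin_comb (r := x) (a := fst) (F := fun p => [:: (1, p.2)])) => [v|p px].
  by rewrite cfE; apply: eq_bigr => p _; rewrite cfE lin_ext_seq1 mul1r.
by apply: in_span_gen; exists p.2 => //; apply: (allP xP); apply: map_f.
Qed.

End FormalSums.

Section Faces.
Variables (d : Order.disp_t) (V : finOrderType d) (R : realType).
Local Notation simplex := {set V}.
Local Notation story := (seq simplex).
Local Notation eps_w := (@eps_w _ V R).
Local Notation eps_step := (@eps_step _ V R).
Local Notation eps_vP := (@eps_vP _ V R).
Implicit Types (A P Q B : simplex) (w : story).

Definition facet P Q := [exists v in Q, P == Q :\ v].

Lemma facetP P Q : reflect (exists2 v, v \in Q & P = Q :\ v) (facet P Q).
Proof. by apply: (iffP exists_inP) => [[v ? /eqP]|[v ? ->]]; exists v. Qed.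

Lemma facet_neq P Q : facet P Q -> P != Q.
Proof. by case/facetP=> v vQ ->; apply/eqP=> /setP/(_ v); rewrite !inE eqxx vQ. Qed.

Lemma facet_sub P Q : facet P Q -> P \subset Q.
Proof. by case/facetP=> v _ ->; apply: subsetDl. Qed.

Lemma facet_neq0 P Q : facet P Q -> Q != set0.
Proof. by case/facetP=> v vQ _; apply/set0Pn; exists v. Qed.

Lemma fair_path P w : fair (P :: w) = path facet P w.
Proof. by elim: w P => //= Q w IHw P; rewrite IHw. Qed.

Lemma nostutter_path P w : nostutter (P :: w) = path (fun P Q => P != Q) P w.
Proof. by elim: w P => //= Q w IHw P; rewrite IHw. Qed.

Lemma eps_w_cons P Q w : eps_w [:: P, Q & w] = eps_step P Q * eps_w (Q :: w).
Proof. by []. Qed.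

Lemma eps_w_cat P w w' : eps_w (P :: w ++ w') = eps_w (P :: w) * eps_w (last P w :: w').
Proof.
elim: w P => [|Q w IHw] P; first by rewrite /= mul1r.
by rewrite cat_cons !eps_w_cons IHw mulrA.
Qed.

Lemma eps_w_sqr w : eps_w w ^+ 2 = 1.
Proof.
have step_sqr P Q : eps_step P Q ^+ 2 = 1.
  by rewrite /eps_step; case: pickP => [v _|_]; rewrite ?sqrr_sign ?expr1n.
elim: w => [|P [|Q w] IHw]; try by rewrite /= expr1n.
by rewrite eps_w_cons exprMn step_sqr IHw mul1r.
Qed.

Lemma fair_insert P w Q B w' : fair (P :: w ++ Q :: B :: w') =
  [&& fair (P :: w), facet (last P w) Q, facet Q B & fair (B :: w')].
Proof. by rewrite !fair_path cat_path. Qed.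

Lemma eps_w_insert P w Q B w' : eps_w (P :: w ++ Q :: B :: w') =
  eps_w (P :: w) * eps_w (B :: w') * (eps_step (last P w) Q * eps_step Q B).
Proof. by rewrite eps_w_cat !eps_w_cons -mulrA [eps_w (B :: w') * _]mulrC -mulrA. Qed.

Lemma eps_step_D1 v Q : v \in Q -> eps_step (Q :\ v) Q = eps_vP v Q.
Proof.
move=> vQ; rewrite /eps_step; case: pickP => [u|/(_ v)]; last by rewrite !inE eqxx vQ.
by case/setDP=> uQ; rewrite !inE uQ andbT negbK => /eqP->.
Qed.

Lemma eps_vP_D1 u v Q : v \in Q -> eps_vP u Q = eps_vP u (Q :\ v) * (-1) ^+ (v < u)%O.
Proof.
move=> vQ; rewrite /eps_vP -exprD (cardsD1 v) !inE vQ addnC /=; congr (_ ^+ (_ + _)).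
by apply: eq_card => t; rewrite !inE andbA.
Qed.

Section Square.
Variables (B : simplex) (u v : V).
Hypotheses (uB : u \in B) (vB : v \in B) (uv : u != v).

Let vBu : v \in B :\ u. Proof. by rewrite !inE eq_sym uv. Qed.
Let uBv : u \in B :\ v. Proof. by rewrite !inE uv. Qed.
Let BuvC : B :\ u :\ v = B :\ v :\ u. Proof. by rewrite !setDDl setUC. Qed.

Lemma facet_square Q :
  facet (B :\ u :\ v) Q && facet Q B = (Q == B :\ u) || (Q == B :\ v).
Proof.
apply/andP/orP=> [[/facetP[p pQ eBQ] /facetP[q qB eQ]]|[]/eqP->].
- have [qu|qu] := eqVneq q u; first by left; rewrite eQ qu.
  have [qv|qv] := eqVneq q v; first by right; rewrite eQ qv.
  have : q \in B :\ u :\ v by rewrite !inE qu qv qB.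
  by rewrite eBQ eQ !inE eqxx andbF.
- by split; apply/facetP; [exists v | exists u].
- by split; apply/facetP; [exists u; rewrite // BuvC | exists v].
Qed.

Lemma eps_step_square :
  eps_step (B :\ u :\ v) (B :\ u) * eps_step (B :\ u) B =
  - (eps_step (B :\ u :\ v) (B :\ v) * eps_step (B :\ v) B).
Proof.
rewrite !eps_step_D1 // BuvC !eps_step_D1 //.
rewrite [eps_vP u B](eps_vP_D1 _ vB) [eps_vP v B](eps_vP_D1 _ uB).
case: (ltgtP u v) uv; rewrite ?eqxx //= => _ _; rewrite expr0 expr1 mulr1 mulrN1.
  by rewrite mulrN opprK mulrC.
by rewrite mulrN mulrC.
Qed.

End Square.

Lemma facet_fillers A Q0 B : facet A Q0 -> facet Q0 B ->
  exists Q1 Q2, [/\ Q1 != Q2, forall Q, facet A Q && facet Q B = (Q == Q1) || (Q == Q2)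
    & eps_step A Q1 * eps_step Q1 B = - (eps_step A Q2 * eps_step Q2 B)].
Proof.
case/facetP=> u uQ0 ->; case/facetP=> v vB Q0E; rewrite Q0E in uQ0 *.
have /andP[uv uB] : (u != v) && (u \in B) by rewrite -in_setD1.
exists (B :\ v), (B :\ u); split.
- by apply/eqP=> /setP/(_ v); rewrite !inE eqxx eq_sym (negbTE uv) vB.
- by move=> Q; rewrite facet_square // eq_sym.
- by rewrite eps_step_square // eq_sym.
Qed.

End Faces.

Section Stories.
Variables (d : Order.disp_t) (V : finOrderType d) (R : realType) (K : {set {set V}}).
Local Notation C := (R[i]).
Local Notation simplex := {set V}.
Local Notation story := (seq simplex).
Local Notation fs := (fsum V R).
Local Notation eps_w := (@eps_w _ V R).
Implicit Types (P Q : simplex) (w : story) (x y g : fs) (G H : fs -> Prop).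

Lemma is_nstory_cons n P w : is_nstory K n (P :: w) =
  [&& all (fun Q => Q \in K) (P :: w), path (fun P Q => P != Q) P w & size w == n].
Proof. by rewrite /is_nstory /is_story nostutter_path /= eqSS -andbA. Qed.

Lemma nstory_nil n : is_nstory K n [::] = false.
Proof. by []. Qed.

Lemma nstory_size n w : is_nstory K n w -> size w = n.+1.
Proof. by case/andP=> _ /eqP. Qed.

Lemma nstory_story n w : is_nstory K n w -> is_story K w.
Proof. by case/andP. Qed.

Lemma story_mem w Q : is_story K w -> Q \in w -> Q \in K.
Proof. by case/and3P=> _ /allP wK _ /wK. Qed.

Lemma story_nstory w : is_story K w -> is_nstory K (size w).-1 w.
Proof. by case: w => // P w Pw; rewrite /is_nstory Pw /=. Qed.

Lemma glue_cons P w Q w' : glue (P :: w) (Q :: w') = P :: w ++ w'.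
Proof. by []. Qed.

Lemma glue_nstory n m P w Q w' : last P w = Q ->
  is_nstory K n (P :: w) -> is_nstory K m (Q :: w') ->
  is_nstory K (n + m) (glue (P :: w) (Q :: w')).
Proof.
move=> <-; rewrite glue_cons !is_nstory_cons /= all_cat cat_path size_cat.
case/and3P=> /andP[PK wK] pw /eqP<- /and3P[/andP[_ w'K] pw' /eqP<-].
by rewrite PK wK w'K pw pw' eqxx.
Qed.

Lemma fair_glue P w Q w' : last P w = Q ->
  fair (glue (P :: w) (Q :: w')) = fair (P :: w) && fair (Q :: w').
Proof. by move=> <-; rewrite glue_cons !fair_path cat_path. Qed.

Lemma eps_w_glue P w Q w' : last P w = Q ->
  eps_w (glue (P :: w) (Q :: w')) = eps_w (P :: w) * eps_w (Q :: w').
Proof. by move=> <-; rewrite glue_cons eps_w_cat. Qed.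

Lemma insert_nstory n P w Q B w' : Q \in K -> Q != last P w -> Q != B ->
  is_nstory K n (P :: w ++ B :: w') -> is_nstory K n.+1 (P :: w ++ Q :: B :: w').
Proof.
move=> QK QA QB; rewrite !is_nstory_cons /= !all_cat /= !cat_path /= !size_cat /=.
case/and3P=> /and3P[-> -> /andP[-> ->]] /and3P[-> _ ->] /eqP <-.
by rewrite QK (eq_sym (last P w)) QA QB !addnS /= eqxx.
Qed.

Lemma genI_nstory n g : genI K n g -> {in g, forall p, is_nstory K n p.2}.
Proof.
case=> _ [[w [nw _ ->]] p | [w [w' [/andP[nw nw'] _ _ _ ->]]] p].
  by rewrite inE => /eqP->.
by rewrite !inE => /orP[]/eqP->.
Qed.

Lemma in_span_unfair n (a : C) w : (0 < n)%N -> is_nstory K n w -> ~~ fair w ->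
  in_span (genI K n) [:: (a, w)].
Proof.
move=> n0 nw uw; apply: (in_span_scale (a := a) (x := [:: (1, w)])).
  by move=> v; rewrite !cfE !lin_ext_seq1 mul1r.
by apply: in_span_gen; split=> //; left; exists w.
Qed.

Lemma in_span_fair_pair n (a : C) w w' : (0 < n)%N ->
  is_nstory K n w -> is_nstory K n w' -> fair w -> fair w' ->
  head set0 w = head set0 w' -> last set0 w = last set0 w' ->
  in_span (genI K n) [:: (a * eps_w w, w); (- (a * eps_w w'), w')].
Proof.
move=> n0 nw nw' fw fw' hw lw.
apply: (in_span_scale (a := a) (x := [:: (eps_w w, w); (- eps_w w', w')])).
  by move=> v; rewrite !cfE /lin_ext !big_cons big_nil /= !addr0 mulrDr !mulrA mulrN.
by apply: in_span_gen; split=> //; right; exists w, w'; rewrite nw nw' fw fw'.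
Qed.

Lemma in_span_unfair_part n x : (0 < n)%N -> {in x, forall p, is_nstory K n p.2} ->
  in_span (genI K n) [seq p <- x | ~~ fair p.2].
Proof.
move=> n0; elim: x => [|p x IHx] nx /=; first exact: in_span_nil.
have {}IHx : in_span (genI K n) [seq p <- x | ~~ fair p.2].
  by apply: IHx => q qx; apply: nx; rewrite inE qx orbT.
case: ifP => // up; apply: in_span_cons IHx.
by case: p nx up => a w nx; apply: in_span_unfair => //; apply: (nx (a, w)); rewrite mem_head.
Qed.

Lemma in_span_split_fair G x : in_span G [seq p <- x | fair p.2] ->
  in_span G [seq p <- x | ~~ fair p.2] -> in_span G x.
Proof.
apply: in_span_add => v; rewrite !cfE /lin_ext !big_filter.
by rewrite (bigID (fun p => fair p.2)).
Qed.

Section StoryMap.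
Variables (n m : nat) (c : pred story) (f : story -> story) (b : bool) (e : C).
Hypothesis f_nstory : forall w, is_nstory K n w -> c w -> is_nstory K (n + m) (f w).
Hypothesis f_fair : forall w, is_nstory K n w -> c w -> fair (f w) = fair w && b.
Hypothesis f_eps : forall w, is_nstory K n w -> c w -> eps_w (f w) = e * eps_w w.
Hypothesis e_sqr : e ^+ 2 = 1.
Hypothesis f_ends : forall w w', is_nstory K n w -> is_nstory K n w' ->
  head set0 w = head set0 w' -> last set0 w = last set0 w' -> c w ->
  [/\ c w', head set0 (f w) = head set0 (f w') & last set0 (f w) = last set0 (f w')].

Lemma genI_story_map g : genI K n g ->
  in_span (genI K (n + m)) [seq (p.1, f p.2) | p <- g & c p.2].
Proof.
case=> n0 [[w [nw uw ->]] | [w [w' [/andP[nw nw'] /andP[fw fw'] hw lw ->]]]] /=.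
  case: ifP => cw; last exact: in_span_nil.
  by apply: in_span_unfair; rewrite ?addn_gt0 ?n0 ?f_nstory ?f_fair // (negbTE uw).
have cw'E : c w' = c w.
  by apply/idP/idP => [/(f_ends nw' nw (esym hw) (esym lw))|/(f_ends nw nw' hw lw)] [].
rewrite cw'E; case cw: (c w) => /=; last exact: in_span_nil.
have [cw' fhw flw] := f_ends nw nw' hw lw cw.
have n0' : (0 < n + m)%N by rewrite addn_gt0 n0.
case: (boolP b) => [bT|bF].
  rewrite -[eps_w w]mul1r -[eps_w w']mul1r -e_sqr expr2 -!mulrA -(f_eps nw cw) -(f_eps nw' cw').
  by apply: in_span_fair_pair; rewrite ?f_nstory ?f_fair ?fw ?fw' ?bT.
apply/in_span_cons/in_span_cons/in_span_nil; apply: in_span_unfair => //;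
  by rewrite ?f_nstory ?f_fair // (negbTE bF) andbF.
Qed.

End StoryMap.

Lemma cf_mulS x y v : cf (mulS x y) v = \sum_(p <- x) \sum_(q <- y)
  p.1 * q.1 * ((last set0 p.2 == head set0 q.2) && (glue p.2 q.2 == v))%:R.
Proof.
rewrite /mulS cfE /lin_ext big_allpairs_dep; apply: eq_bigr => p _.
rewrite big_filter big_mkcond; apply: eq_bigr => q _ /=.
by case: (_ == _); rewrite ?mulr0.
Qed.

Lemma cf_mulSl x y v : cf (mulS x y) v = lin_ext (fun s => cf (mulS [:: (1, s)] y) v) x.
Proof.
rewrite cf_mulS /lin_ext; apply: eq_bigr => p _; rewrite cf_mulS big_seq1 mulr_sumr.
by apply: eq_bigr => q _; rewrite mul1r mulrA.
Qed.

Lemma cf_mulSr x y v : cf (mulS x y) v = lin_ext (fun s => cf (mulS x [:: (1, s)]) v) y.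
Proof.
rewrite cf_mulS /lin_ext exchange_big; apply: eq_bigr => q _; rewrite cf_mulS mulr_sumr.
by apply: eq_bigr => p _; rewrite big_seq1 mulr1 mulrCA mulrA.
Qed.

Lemma cf_mulS_story_r x u v : cf (mulS x [:: (1, u)]) v =
  cf [seq (p.1, glue p.2 u) | p <- x & last set0 p.2 == head set0 u] v.
Proof.
rewrite cf_mulS cfE /lin_ext big_map big_filter [RHS]big_mkcond; apply: eq_bigr => p _ /=.
by rewrite big_seq1 mulr1; case: (_ == _); rewrite ?mulr0.
Qed.

Lemma cf_mulS_story_l u x v : cf (mulS [:: (1, u)] x) v =
  cf [seq (p.1, glue u p.2) | p <- x & last set0 u == head set0 p.2] v.
Proof.
rewrite cf_mulS big_seq1 cfE /lin_ext big_map big_filter [RHS]big_mkcond.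
by apply: eq_bigr => p _ /=; rewrite mul1r; case: (_ == _); rewrite ?mulr0.
Qed.

Lemma mulS_genI_story n m g u : genI K n g -> is_nstory K m u ->
  in_span (genI K (n + m)) (mulS g [:: (1, u)]).
Proof.
case: u => [//|Q u] gn nu; apply: in_span_eq (cf_mulS_story_r g _) _.
apply: (genI_story_map (c := fun w => last set0 w == Q) (f := fun w => glue w (Q :: u))
  (b := fair (Q :: u)) (e := eps_w (Q :: u))) gn.
- by move=> [|P w]; rewrite ?nstory_nil // => nw /eqP lw; apply: glue_nstory.
- by move=> [|P w]; rewrite ?nstory_nil // => _ /eqP lw; apply: fair_glue.
- by move=> [|P w]; rewrite ?nstory_nil // => _ /eqP lw; rewrite eps_w_glue // mulrC.
- exact: eps_w_sqr.
move=> [|P w] [|P' w']; rewrite ?nstory_nil // => _ _ /= <- lw /eqP lQ.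
by rewrite -lw lQ !last_cat -lw.
Qed.

Lemma mulS_story_genI n m g u : genI K n g -> is_nstory K m u ->
  in_span (genI K (m + n)) (mulS [:: (1, u)] g).
Proof.
case: u => [//|Q u] gn nu; apply: in_span_eq (cf_mulS_story_l _ g) _; rewrite addnC.
apply: (genI_story_map (c := fun w => last Q u == head set0 w) (f := glue (Q :: u))
  (b := fair (Q :: u)) (e := eps_w (Q :: u))) gn.
- by move=> [|P w]; rewrite ?nstory_nil // addnC => nw /eqP uP; apply: glue_nstory.
- by move=> [|P w]; rewrite ?nstory_nil // => _ /eqP uP; rewrite fair_glue // andbC.
- by move=> [|P w]; rewrite ?nstory_nil // => _ /eqP uP; rewrite eps_w_glue.
- exact: eps_w_sqr.
move=> [|P w] [|P' w']; rewrite ?nstory_nil // => _ _ /= <- lw /eqP uP.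
by rewrite uP !last_cat uP.
Qed.

Lemma mulS_span_r (P : pred story) H g y :
  (forall u, P u -> in_span H (mulS g [:: (1, u)])) -> all P (map snd y) -> in_span H (mulS g y).
Proof.
move=> gP /in_span_basis.
apply: (in_span_linear (op := mulS g) (k := fun s v => cf (mulS g [:: (1, s)]) v)).
  exact: cf_mulSr.
by move=> _ [u Pu ->]; apply: gP.
Qed.

Lemma mulS_span_l (P : pred story) H g y :
  (forall u, P u -> in_span H (mulS [:: (1, u)] g)) -> all P (map snd y) -> in_span H (mulS y g).
Proof.
move=> gP /in_span_basis.
apply: (in_span_linear (op := fun y => mulS y g) (k := fun s v => cf (mulS [:: (1, s)] g) v)).
  by move=> x v; rewrite cf_mulSl.
by move=> _ [u Pu ->]; apply: gP.
Qed.

Lemma Iall_mulSr x y : in_Lambda K y -> Iall K x -> Iall K (mulS x y).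
Proof.
move=> yK; apply: (in_span_linear (op := fun x => mulS x y)
  (k := fun s v => cf (mulS [:: (1, s)] y) v)) => [x' v|g [n gn]].
  by rewrite cf_mulSl.
apply: mulS_span_r yK => u /story_nstory nu.
by apply: in_span_mono _ (mulS_genI_story gn nu) => h; exists (n + (size u).-1).
Qed.

Lemma Iall_mulSl x y : in_Lambda K y -> Iall K x -> Iall K (mulS y x).
Proof.
move=> yK; apply: (in_span_linear (op := mulS y)
  (k := fun s v => cf (mulS y [:: (1, s)]) v)) => [x' v|g [n gn]].
  exact: cf_mulSr.
apply: mulS_span_l yK => u /story_nstory nu.
by apply: in_span_mono _ (mulS_story_genI gn nu) => h; exists ((size u).-1 + n).
Qed.

End Stories.

Section Differential.
Variables (d : Order.disp_t) (V : finOrderType d) (R : realType) (K : {set {set V}}).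
Local Notation C := (R[i]).
Local Notation simplex := {set V}.
Local Notation story := (seq simplex).
Local Notation fs := (fsum V R).
Local Notation eps_w := (@eps_w _ V R).
Local Notation eps_step := (@eps_step _ V R).
Implicit Types (P Q : simplex) (w : story) (x y g : fs).

Definition one_stories : fs :=
  flatten [seq [seq (1, [:: P; Q]) | Q <- enum K & P != Q] | P <- enum K].

Lemma one_stories_nstory : all (is_nstory K 1) (map snd one_stories).
Proof.
apply/allP=> _ /mapP[_ /flattenP[_ /mapP[P PK ->] /mapP[Q + ->]] ->].
rewrite mem_filter mem_enum => /andP[PQ QK]; rewrite mem_enum in PK.
by rewrite is_nstory_cons /= PK QK PQ.
Qed.

Lemma sum_enum_eq (A : {set simplex}) (c : pred simplex) (F : simplex -> C) P : P \in A ->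
  \sum_(Q <- enum A | c Q) (Q == P)%:R * F Q = (c P)%:R * F P.
Proof.
move=> PA; rewrite big_enum_cond big_mkcond (bigD1 P) //= PA eqxx mul1r.
rewrite big1 => [|Q /negbTE->]; last by rewrite mul0r if_same.
by rewrite addr0 /=; case: (c P); rewrite ?mul1r ?mul0r.
Qed.

Definition ins w k Q : story := take k w ++ Q :: drop k w.

Definition dS_term w k : fs := [seq ((-1) ^+ k, ins w k Q) | Q <- enum K & ins_ok w k Q].

Definition dS_inner1 w : fs := flatten [seq dS_term w k | k <- iota 1 (size w).-1].

Lemma dS1_split w : w != [::] -> dS1 R K w = dS_term w 0 ++ dS_inner1 w ++ dS_term w (size w).
Proof.
case: w => [//|P w] _.
have -> : dS1 R K (P :: w) = flatten [seq dS_term (P :: w) k | k <- 0 :: iota 1 (size w).+1].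
  by [].
have -> : iota 1 (size w).+1 = iota 1 (size w) ++ [:: (size w).+1].
  by rewrite -[(size w).+1]addn1 iotaD add1n addn1.
by rewrite /= map_cat flatten_cat /= cats0.
Qed.

Lemma cf_dS_term_first w v : is_story K w ->
  cf (dS_term w 0) v = cf (mulS one_stories [:: (1, w)]) v.
Proof.
case: w => [//|P w] Pw; have PK : P \in K := story_mem Pw (mem_head P w).
rewrite cf_map_filter cf_mulS /one_stories big_flatten big_map [LHS]big_mkcond.
apply: eq_bigr => Q _; rewrite big_map big_filter.
under eq_bigr => Q' _ do rewrite big_seq1 /= !mul1r -mulnb natrM.
rewrite sum_enum_eq //= expr0 mul1r.
by rewrite /ins_ok /=; case: (Q != P); rewrite ?mul1r ?mul0r.
Qed.

Lemma cf_dS_term_last w v : is_story K w ->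
  cf (dS_term w (size w)) v = (-1) ^+ size w * cf (mulS [:: (1, w)] one_stories) v.
Proof.
case: w => [//|P w] Pw; set L := last P w.
have LK : L \in K := story_mem Pw (mem_last P w).
rewrite cf_map_filter cf_mulS big_seq1 /one_stories big_flatten big_map.
have blockE Q : \sum_(q <- [seq (1 : C, [:: Q; Q']) | Q' <- enum K & Q != Q'])
    1 * q.1 * ((last set0 (P :: w) == head set0 q.2) && (glue (P :: w) q.2 == v))%:R =
    (Q == L)%:R * \sum_(Q' <- enum K | Q != Q') (P :: w ++ [:: Q'] == v)%:R.
  rewrite big_map big_filter mulr_sumr; apply: eq_bigr => Q' _.
  by rewrite /= !mul1r -mulnb natrM eq_sym.
under eq_bigr do rewrite blockE.
rewrite (sum_enum_eq xpredT) // mul1r mulr_sumr big_mkcond [RHS]big_mkcond.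
by apply: eq_bigr => Q _; rewrite /ins_ok /ins eqxx andbT take_size drop_size nth_last /= eq_sym.
Qed.

Section Interior.
Hypothesis SC : simplicial_complex K.

Lemma insert_span n P w B w' : is_nstory K n (P :: w ++ B :: w') ->
  in_span (genI K n.+1)
    [seq (1 : C, P :: w ++ Q :: B :: w') | Q <- enum K & (Q != last P w) && (Q != B)].
Proof.
move=> nw; set A := last P w; pose ins Q := P :: w ++ Q :: B :: w'.
apply: in_span_split_fair; last first.
  apply: in_span_unfair_part => // _ /mapP[Q + ->].
  by rewrite mem_filter mem_enum => /andP[/andP[QA QB] QK]; apply: insert_nstory.
have fairE v : cf [seq p <- [seq (1 : C, ins Q) | Q <- enum K & (Q != A) && (Q != B)]
                     | fair p.2] v =
    \sum_(Q in K | [&& Q != A, Q != B & fair (ins Q)]) (ins Q == v)%:R.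
  rewrite cfE /lin_ext big_filter big_map big_filter_cond big_enum_cond.
  by apply: eq_big => [Q|Q _]; rewrite ?mul1r // -andbA.
case: (pickP (fun Q => [&& Q \in K, Q != A, Q != B & fair (ins Q)])) => [Q0|]; last first.
  move=> nofill; apply: (in_span_eq _ (in_span_nil _)) => v.
  by rewrite fairE big_pred0 // /cf big_nil.
case/and4P=> _ _ _; rewrite fair_insert => /and4P[fa fAQ0 fQ0B fb].
have [Q1 [Q2 [Q12 fillE eps12]]] := facet_fillers R fAQ0 fQ0B.
have BK : B \in K.
  by apply: (story_mem (nstory_story nw)); rewrite -cat_cons mem_cat mem_head orbT.
have key Q : [&& Q \in K, Q != A, Q != B & fair (ins Q)] = (Q == Q1) || (Q == Q2).
  rewrite fair_insert fa fb andbT /= -fillE.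
  apply/and4P/andP => [[_ _ _ /andP[//]] | [fAQ fQB]].
  split; [|by rewrite eq_sym facet_neq | exact: facet_neq | by rewrite fAQ fQB].
  by case: SC => _ _; apply; [exact: BK | exact: facet_sub | exact: facet_neq0 fAQ].
have /and4P[Q1K Q1A Q1B fQ1] : [&& Q1 \in K, Q1 != A, Q1 != B & fair (ins Q1)].
  by rewrite key eqxx.
have /and4P[Q2K Q2A Q2B fQ2] : [&& Q2 \in K, Q2 != A, Q2 != B & fair (ins Q2)].
  by rewrite key eqxx orbT.
have e21 : eps_w (ins Q2) = - eps_w (ins Q1) by rewrite !eps_w_insert eps12 mulrN opprK.
apply: (in_span_eq _ (in_span_fair_pair (eps_w (ins Q1)) _ (insert_nstory Q1K Q1A Q1B nw)
  (insert_nstory Q2K Q2A Q2B nw) fQ1 fQ2 _ _)) => //; last by rewrite /ins /= !last_cat.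
move=> v; rewrite fairE (eq_bigl _ _ key) (bigD1 Q1) ?eqxx // (big_pred1 Q2); last first.
  by move=> Q /=; rewrite andb_orl andbN /= andb_idr // => /eqP->; rewrite eq_sym.
rewrite e21 mulrN opprK -expr2 eps_w_sqr cfE /lin_ext !big_cons big_nil /=.
by rewrite !mul1r addr0.
Qed.

Lemma dS_term_inner_span n w k : is_nstory K n w -> (0 < k < size w)%N ->
  in_span (genI K n.+1) (dS_term w k).
Proof.
move=> nw /andP[k0 kw].
case tk: (take k w) => [|P a].
  by move: k0; rewrite -(size_takel (ltnW kw)) tk.
case dk: (drop k w) => [|B b].
  by move: kw; rewrite -subn_gt0 -size_drop dk.
have kE : k = (size a).+1 by rewrite -(size_takel (ltnW kw)) tk.
have wE : w = P :: a ++ B :: b by rewrite -(cat_take_drop k w) tk dk.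
rewrite {tk dk}wE {}kE in nw *.
apply: (in_span_scale (a := (-1) ^+ (size a).+1) _ (insert_span nw)) => v.
rewrite !cf_map_filter mulr_sumr big_mkcond [RHS]big_mkcond; apply: eq_bigr => Q _.
rewrite /ins_ok /ins /= take_size_cat ?drop_size_cat // mul1r.
rewrite -cat_cons nth_cat /= ltnSn (nth_last set0 (P :: a)) nth_cat ltnn subnn /=.
by rewrite eqSS size_cat -{1}[size a]addn0 eqn_add2l.
Qed.

Lemma dS_inner1_span n w : is_nstory K n w -> in_span (genI K n.+1) (dS_inner1 w).
Proof.
move=> nw; have w0 : (0 < size w)%N by rewrite (nstory_size nw).
by apply: in_span_flatten => k; rewrite mem_iota add1n prednK //; apply: dS_term_inner_span.
Qed.

Definition dS_inner x : fs := flatten [seq scale_fsum p.1 (dS_inner1 p.2) | p <- x].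

Lemma dS_homogeneous n x : {in x, forall p, is_nstory K n p.2} ->
  cf (dS K x) =1 cf (mulS one_stories x ++ dS_inner x ++
                     scale_fsum ((-1) ^+ n.+1) (mulS x one_stories)).
Proof.
move=> nx v; rewrite 2!cf_cat cf_scale_fsum cf_mulSr cf_mulSl.
rewrite [cf (dS _ _) _]cf_flatten [cf (dS_inner _) _]cf_flatten /lin_ext mulr_sumr -!big_split.
apply: eq_big_seq => p /nx np.
have sp := nstory_story np; have sw := nstory_size np.
rewrite dS1_split; last by rewrite -size_eq0 sw.
rewrite 2!cf_cat cf_dS_term_first // cf_dS_term_last // sw.
by rewrite !mulrDr mulrCA.
Qed.

Lemma dS_genI n g : genI K n g -> in_span (genI K n.+1) (dS K g).
Proof.
move=> gn; apply: in_span_eq (dS_homogeneous (genI_nstory gn)) _.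
apply: in_span_add (cf_cat _ _) _ _.
  exact: mulS_span_l (fun u nu => mulS_story_genI gn nu) one_stories_nstory.
apply: in_span_add (cf_cat _ _) _ _.
  apply: in_span_lin_comb (cf_flatten _ _ _) _ => p /(genI_nstory gn).
  exact: dS_inner1_span.
apply: in_span_scale (cf_scale_fsum _ _) _; rewrite -addn1.
exact: mulS_span_r (fun u nu => mulS_genI_story gn nu) one_stories_nstory.
Qed.

Lemma In_dS n x : In K n x -> In K n.+1 (dS K x).
Proof.
apply: (in_span_linear (op := dS K) (k := fun s v => cf (dS1 R K s) v)).
  by move=> x' v; rewrite cf_flatten.
exact: dS_genI.
Qed.

End Interior.

End Differential.

Theorem mainTheorem2 (d : Order.disp_t) (V : finOrderType d) (R : realType)
    (K : {set {set V}}) :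
  (0 < #|V|)%N -> simplicial_complex K ->
  (* I is a two-sided ideal of Lambda_S *)
  (forall x y : fsum V R, in_Lambda K x -> in_Lambda K y -> Iall K x ->
      Iall K (mulS x y) /\ Iall K (mulS y x)) /\
  (* d_S (I^n) is contained in I^(n+1) *)
  (forall (n : nat) (x : fsum V R), in_Lambda K x -> In K n x -> In K n.+1 (dS K x)).
Proof.
move=> _ SC; split=> [x y _ yK xI | n x _]; last exact: In_dS.
by split; [apply: Iall_mulSr | apply: Iall_mulSl].
Qed.
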